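(* Let $(\mathcal X,R)$ be a quantum poset and let $\mathcal W$ be any quantum set. Then the relation $\sqsubseteq$ on the set $\mathbf{qSet}(\mathcal W,\mathcal X)$ of functions $\mathcal W\to\mathcal X$, defined by $F\sqsubseteq G$ iff $G\le R\circ F$, is a partial order (reflexive, transitive and antisymmetric).
   Context: A quantum set $\mathcal X$ is a set $\mathrm{At}(\mathcal X)$ of nonzero finite-dimensional Hilbert spaces, called its atoms. A (binary) relation $R$ from a quantum set $\mathcal X$ to a quantum set $\mathcal Y$ is a choice of a linear subspace $R(X,Y)\subseteq L(X,Y)$ for every $X\in\mathrm{At}(\mathcal X)$, $Y\in\mathrm{At}(\mathcal Y)$. Composition: $(S\circ R)(X,Z)=\mathrm{span}\{sr: r\in R(X,Y),\ s\in S(Y,Z),\ Y\in\mathrm{At}(\mathcal Y)\}$. Identity: $I_{\mathcal X}(X,X)=\mathbb C\cdot 1_X$ and $I_{\mathcal X}(X,X')=0$ for $X\ne X'$. Adjoint: $R^\dagger(Y,X)=\{r^\dagger : r\in R(X,Y)\}$. Order: $R\le S$ iff $R(X,Y)\subseteq S(X,Y)$ for all atoms $X,Y$; meets $\wedge$ (also infinite) are entrywise intersections. A function $F:\mathcal X\to\mathcal Y$ is a relation from $\mathcal X$ to $\mathcal Y$ with $F\circ F^\dagger\le I_{\mathcal Y}$ and $F^\dagger\circ F\ge I_{\mathcal X}$; quantum sets and functions form the category $\mathbf{qSet}$. A quantum poset is a pair $(\mathcal X,R)$ with $R$ a relation from $\mathcal X$ to $\mathcal X$ satisfying $I_{\mathcal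 X}\le R$, $R\circ R\le R$, and $R\wedge R^\dagger\le I_{\mathcal X}$. *)

From mathcomp Require Import all_boot all_order all_algebra.
Set Implicit Arguments. Unset Strict Implicit. Unset Printing Implicit Defensive.
Import Order.TTheory GRing.Theory Num.Theory.
Local Open Scope ring_scope.

(* A quantum set: an (arbitrary, possibly infinite) family of atoms, each atom
   being a nonzero finite-dimensional Hilbert space, represented up to unitary
   isomorphism by C^(qdim X) with its standard inner product. *)
Record qset := QSet {
  qatom : Type;
  qdim : qatom -> nat;
  qdim_gt0 : forall X, (0 < qdim X)%N }.

Section QRel.
Variable C : numClosedFieldType.

(* subsets of L(C^n, C^m) = 'M[C]_(m, n) *)
Definition mxset (m n : nat) := 'M[C]_(m, n) -> Prop.

Definition is_subspace m n (U : mxset m n) : Prop :=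
  U 0 /\ forall (a : C) x y, U x -> U y -> U (a *: x + y).

Definition mxspan m n (S : mxset m n) : mxset m n :=
  fun x => forall U : mxset m n, is_subspace U -> (forall y, S y -> U y) -> U x.

Definition mxadj m n (A : 'M[C]_(m, n)) : 'M[C]_(n, m) := map_mx (fun z => z^*) A^T.

(* a (candidate) relation: a subset R(X,Y) of L(X,Y) for all atoms X, Y *)
Definition qrel (A B : qset) :=
  forall (X : qatom A) (Y : qatom B), mxset (qdim Y) (qdim X).

Definition is_qrel A B (R : qrel A B) : Prop :=
  forall X Y, is_subspace (R X Y).

Definition qcomp A B D (S : qrel B D) (R : qrel A B) : qrel A D :=
  fun X Z => mxspan (fun m => exists (Y : qatom B) r s,
                       R X Y r /\ S Y Z s /\ m = s *m r).

Definition qid (A : qset) : qrel A A :=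
  fun X X' m => m = 0 \/
    exists (e : X = X') (c : C),
      m = c *: castmx (f_equal (@qdim A) e, erefl (qdim X)) (1%:M : 'M[C]_(qdim X)).

Definition qadj A B (R : qrel A B) : qrel B A :=
  fun Y X m => exists r, R X Y r /\ m = mxadj r.

Definition qmeet A B (R S : qrel A B) : qrel A B :=
  fun X Y m => R X Y m /\ S X Y m.

Definition qle A B (R S : qrel A B) : Prop :=
  forall X Y m, R X Y m -> S X Y m.

Definition is_qfun A B (F : qrel A B) : Prop :=
  [/\ is_qrel F, qle (qcomp F (qadj F)) (@qid B) & qle (@qid A) (qcomp (qadj F) F)].

Definition is_qposet A (R : qrel A A) : Prop :=
  [/\ is_qrel R, qle (@qid A) R, qle (qcomp R R) R & qle (qmeet R (qadj R)) (@qid A)].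

Definition qfun_le A W (R : qrel A A) (F G : qrel W A) : Prop :=
  qle G (qcomp R F).

End QRel.

From mathcomp Require Import all_boot all_order all_algebra.
From Stdlib Require Import FunctionalExtensionality PropExtensionality.
Import Order.TTheory GRing.Theory Num.Theory.
Set Implicit Arguments. Unset Strict Implicit.
Local Open Scope ring_scope.

(* The proof only uses the algebra of relations: composition is monotone and
   associative up to <=, the identity relation is a two-sided unit, and the
   adjoint reverses compositions.
   Reflexivity of ⊑ then follows from I <= R, and transitivity from R∘R <= R.
   For antisymmetry, F ⊑ G and G ⊑ F give G∘F† <= R∘F∘F† <= R (as F∘F† <= I)
   and symmetrically F∘G† <= R, hence G∘F† <= (F∘G†)† <= R†.  Antisymmetry of R
   yields G∘F† <= I, and then G <= G∘F†∘F <= F because F†∘F >= I.  Swapping the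
   roles gives F <= G, and extensionality turns this into F = G. *)

Section Adjoint.
Variable C : numClosedFieldType.

Lemma mxadjK m n (A : 'M[C]_(m, n)) : mxadj (mxadj A) = A.
Proof. by apply/matrixP=> i j; rewrite !mxE conjCK. Qed.

Lemma mxadjM m n p (A : 'M[C]_(m, n)) (B : 'M[C]_(n, p)) :
  mxadj (A *m B) = mxadj B *m mxadj A.
Proof. by rewrite /mxadj trmx_mul map_mxM. Qed.

Lemma mxadj_semilinear m n a (A B : 'M[C]_(m, n)) :
  mxadj (a *: A + B) = a^* *: mxadj A + mxadj B.
Proof. by apply/matrixP=> i j; rewrite !mxE rmorphD rmorphM. Qed.

Lemma mxadj0 m n : mxadj (0 : 'M[C]_(m, n)) = 0.
Proof. by apply/matrixP=> i j; rewrite !mxE rmorph0. Qed.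

End Adjoint.

Section Span.
Variable C : numClosedFieldType.

Lemma mxspan_min m n (S U : mxset C m n) :
  is_subspace U -> (forall y, S y -> U y) -> forall x, mxspan S x -> U x.
Proof. by move=> hU hS x hx; apply: hx. Qed.

Lemma mxspan_gen m n (S : mxset C m n) x : S x -> mxspan S x.
Proof. by move=> hx U _ h; apply: h. Qed.

Lemma mxspan_subspace m n (S : mxset C m n) : is_subspace (mxspan S).
Proof.
split; first by move=> U [h0 _] _.
move=> a x y hx hy U hU hS; case: (hU) => _ hlin.
by apply: hlin; [apply: hx | apply: hy].
Qed.

(* Preimages of subspaces under right/left multiplication and under the
   adjoint are subspaces; they serve as induction predicates over spans. *)
Lemma subspace_mulr m n p (U : mxset C m p) (r : 'M[C]_(n, p)) :
  is_subspace U -> is_subspace (fun x : 'M[C]_(m, n) => U (x *m r)).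
Proof.
move=> [h0 hU]; split; first by rewrite mul0mx.
by move=> a x y hx hy; rewrite mulmxDl -scalemxAl; apply: hU.
Qed.

Lemma subspace_mull m n p (U : mxset C m p) (s : 'M[C]_(m, n)) :
  is_subspace U -> is_subspace (fun x : 'M[C]_(n, p) => U (s *m x)).
Proof.
move=> [h0 hU]; split; first by rewrite mulmx0.
by move=> a x y hx hy; rewrite mulmxDr -scalemxAr; apply: hU.
Qed.

Lemma subspace_adj m n (U : mxset C n m) :
  is_subspace U -> is_subspace (fun x : 'M[C]_(m, n) => U (mxadj x)).
Proof.
move=> [h0 hU]; split; first by rewrite mxadj0.
by move=> a x y hx hy; rewrite mxadj_semilinear; apply: hU.
Qed.

End Span.

Section RelationAlgebra.
Variable C : numClosedFieldType.
Variables A B D E : qset.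

Lemma qle_trans (P Q S : qrel C A B) : qle P Q -> qle Q S -> qle P S.
Proof. by move=> h1 h2 X Y m /h1 /h2. Qed.

Lemma qle_antisym (P Q : qrel C A B) : qle P Q -> qle Q P -> P = Q.
Proof.
move=> hPQ hQP.
apply: functional_extensionality_dep => X; apply: functional_extensionality_dep => Y.
apply: functional_extensionality => m.
by apply: propositional_extensionality; split; [apply: hPQ | apply: hQP].
Qed.

Lemma qcomp_monol (S S' : qrel C B D) (R : qrel C A B) :
  qle S S' -> qle (qcomp S R) (qcomp S' R).
Proof.
move=> h X Z; apply: mxspan_min; first exact: mxspan_subspace.
move=> _ [Y [r [s [hr [hs ->]]]]]; apply: mxspan_gen.
by exists Y, r, s; split=> //; split=> //; apply: h.
Qed.

Lemma qcomp_monor (S : qrel C B D) (R R' : qrel C A B) :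
  qle R R' -> qle (qcomp S R) (qcomp S R').
Proof.
move=> h X Z; apply: mxspan_min; first exact: mxspan_subspace.
move=> _ [Y [r [s [hr [hs ->]]]]]; apply: mxspan_gen.
by exists Y, r, s; split; first apply: h.
Qed.

Lemma qcomp_assoc_le (T : qrel C D E) (S : qrel C B D) (R : qrel C A B) :
  qle (qcomp (qcomp T S) R) (qcomp T (qcomp S R)).
Proof.
move=> X Z; apply: mxspan_min; first exact: mxspan_subspace.
move=> _ [Y [r [m [hr [hm ->]]]]].
move: m hm; apply: mxspan_min; first by apply/subspace_mulr/mxspan_subspace.
move=> _ [Y' [s [t [hs [ht ->]]]]].
rewrite -mulmxA; apply: mxspan_gen; exists Y', (s *m r), t; split=> //.
by apply: mxspan_gen; exists Y, r, s.
Qed.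

Lemma qcomp_assoc_ge (T : qrel C D E) (S : qrel C B D) (R : qrel C A B) :
  qle (qcomp T (qcomp S R)) (qcomp (qcomp T S) R).
Proof.
move=> X Z; apply: mxspan_min; first exact: mxspan_subspace.
move=> _ [Y [m [t [hm [ht ->]]]]].
move: m hm; apply: mxspan_min; first by apply/subspace_mull/mxspan_subspace.
move=> _ [Y' [r [s [hr [hs ->]]]]].
rewrite mulmxA; apply: mxspan_gen; exists Y', r, (t *m s); do 2!split=> //.
by apply: mxspan_gen; exists Y, s, t.
Qed.

(* The identity relation is a unit for composition: I∘F = F = F∘I whenever
   F is a relation (the inclusions F <= I∘F and F <= F∘I need no linearity). *)
Lemma qcomp_idl_le (F : qrel C A B) : is_qrel F -> qle (qcomp (@qid C B) F) F.
Proof.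
move=> hF X Z; have [h0 hlin] := hF X Z; apply: mxspan_min; first exact: hF.
move=> _ [Y [r [i [hr [[->|[e [c ->]]] ->]]]]]; first by rewrite mul0mx.
by subst Z; rewrite castmx_id -scalemxAl mul1mx -[_ *: r]addr0; apply: hlin.
Qed.

Lemma qcomp_idl_ge (F : qrel C A B) : qle F (qcomp (@qid C B) F).
Proof.
move=> X Y f hf; apply: mxspan_gen; exists Y, f, 1%:M; do 2!split=> //.
  by right; exists erefl, 1; rewrite castmx_id scale1r.
by rewrite mul1mx.
Qed.

Lemma qcomp_idr_ge (F : qrel C A B) : qle F (qcomp F (@qid C A)).
Proof.
move=> X Y f hf; apply: mxspan_gen; exists X, 1%:M, f; split.
  by right; exists erefl, 1; rewrite castmx_id scale1r.
by rewrite mulmx1.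
Qed.

Lemma qcomp_idr_le (F : qrel C A B) : is_qrel F -> qle (qcomp F (@qid C A)) F.
Proof.
move=> hF X Z; have [h0 hlin] := hF X Z; apply: mxspan_min; first exact: hF.
move=> _ [Y [i [r [[->|[e [c ->]]] [hr ->]]]]]; first by rewrite mulmx0.
by subst Y; rewrite castmx_id -scalemxAr mulmx1 -[_ *: r]addr0; apply: hlin.
Qed.

Lemma qadj_mono (P Q : qrel C A B) : qle P Q -> qle (qadj P) (qadj Q).
Proof. by move=> h Y X _ [r [hr ->]]; exists r; split; first apply: h. Qed.

Lemma qadjK_ge (R : qrel C A B) : qle R (qadj (qadj R)).
Proof.
by move=> X Y r hr; exists (mxadj r); split; [exists r | rewrite mxadjK].
Qed.

Lemma qadj_comp (S : qrel C B D) (R : qrel C A B) :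
  qle (qcomp (qadj R) (qadj S)) (qadj (qcomp S R)).
Proof.
move=> Z X m hm; exists (mxadj m); split; last by rewrite mxadjK.
move: m hm; apply: mxspan_min; first by apply/subspace_adj/mxspan_subspace.
move=> _ [Y [_ [_ [[s [hs ->]] [[r [hr ->]] ->]]]]].
by rewrite mxadjM !mxadjK; apply: mxspan_gen; exists Y, r, s.
Qed.

End RelationAlgebra.

Section FunctionOrder.
Variable C : numClosedFieldType.
Variables W X : qset.
Implicit Types (R : qrel C X X) (F G : qrel C W X).

(* If G <= R∘F for a function F, then G∘F† <= R, since F∘F† <= I. *)
Lemma qcomp_adj_le_of_qfun_le R F G :
  is_qrel R -> is_qfun F -> qfun_le R F G -> qle (qcomp G (qadj F)) R.
Proof.
move=> hR [_ hFF _] hFG.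
apply: qle_trans; first exact: (qcomp_monol (R:=qadj F) hFG).
apply: qle_trans; first exact: qcomp_assoc_le.
apply: qle_trans; first exact: (qcomp_monor (S:=R) hFF).
exact: qcomp_idr_le.
Qed.

(* A relation G with G∘F† <= I lies below the function F, since F†∘F >= I. *)
Lemma qle_qfun_of_qcomp_adj_le_id F G :
  is_qfun F -> qle (qcomp G (qadj F)) (@qid C X) -> qle G F.
Proof.
move=> [hF _ hFF] hGF.
apply: qle_trans; first exact: qcomp_idr_ge.
apply: qle_trans; first exact: (qcomp_monor (S:=G) hFF).
apply: qle_trans; first exact: qcomp_assoc_ge.
apply: qle_trans; first exact: (qcomp_monol (R:=F) hGF).
exact: qcomp_idl_le.
Qed.

Lemma qfun_le_refl R F : qle (@qid C X) R -> qfun_le R F F.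
Proof.
move=> hI; apply: qle_trans; first exact: qcomp_idl_ge.
exact: qcomp_monol.
Qed.

Lemma qfun_le_trans R F G H :
  qle (qcomp R R) R -> qfun_le R F G -> qfun_le R G H -> qfun_le R F H.
Proof.
move=> hRR hFG hGH; apply: qle_trans; first exact: hGH.
apply: qle_trans; first exact: (qcomp_monor (S:=R) hFG).
apply: qle_trans; first exact: qcomp_assoc_ge.
exact: qcomp_monol.
Qed.

Lemma qfun_le_antisym_le R F G : is_qposet R -> is_qfun F -> is_qfun G ->
  qfun_le R F G -> qfun_le R G F -> qle G F.
Proof.
move=> [hR _ _ hanti] hFf hGf hFG hGF.
have hGFR := qcomp_adj_le_of_qfun_le hR hFf hFG.
have hFGR := qcomp_adj_le_of_qfun_le hR hGf hGF.
have hGFRadj : qle (qcomp G (qadj F)) (qadj R).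
  apply: qle_trans; first exact: (qcomp_monol (R:=qadj F) (qadjK_ge (R:=G))).
  apply: qle_trans; first exact: qadj_comp.
  exact: qadj_mono.
apply: qle_qfun_of_qcomp_adj_le_id => // Y Z m hm.
by apply: hanti; split; [apply: hGFR | apply: hGFRadj].
Qed.

Lemma qfun_le_antisym R F G : is_qposet R -> is_qfun F -> is_qfun G ->
  qfun_le R F G -> qfun_le R G F -> F = G.
Proof.
move=> hR hF hG hFG hGF.
apply: qle_antisym.
- exact: (qfun_le_antisym_le hR hG hF).
- exact: (qfun_le_antisym_le hR hF hG).
Qed.

End FunctionOrder.

Theorem mainTheorem1 (C : numClosedFieldType) (X : qset) (R : qrel C X X)
  (HR : is_qposet R) (W : qset) :
  (forall F : qrel C W X, is_qfun F -> qfun_le R F F) /\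
  (forall F G H : qrel C W X, is_qfun F -> is_qfun G -> is_qfun H ->
     qfun_le R F G -> qfun_le R G H -> qfun_le R F H) /\
  (forall F G : qrel C W X, is_qfun F -> is_qfun G ->
     qfun_le R F G -> qfun_le R G F -> F = G).
Proof.
have [_ hI hRR _] := HR.
split; [|split].
- by move=> F _; apply: qfun_le_refl hI.
- by move=> F G H _ _ _; apply: qfun_le_trans hRR.
- by move=> F G; apply: qfun_le_antisym HR.
Qed.
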